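(* Let $N\ge1$ and consider the infinite $N$-ary tree with vertex set $V$ and conductance $1$ on every edge, with base point $o=\emptyset$. Let $\eta=\eta_1\dots\eta_n\in V$ with $n\ge1$. Then the solution (potential) $v$ in the energy space $E$ of $\Delta v=\delta_\emptyset-\delta_\eta$ is given by $$v(\omega_1\dots\omega_m)=n-p(\omega_1\dots\omega_m,\eta_1\dots\eta_n),$$ where $p(\omega,\eta)$ is the length of the longest common prefix of $\omega$ and $\eta$ (the largest $p\ge0$ with $p\le m,n$ and $\omega_i=\eta_i$ for $i=1,\dots,p$). Moreover the resistance metric is $$\operatorname{dist}(x,y)=\sqrt{2\,l(x,y)},\qquad x,y\in V,$$ where $l(x,y)$ is the length of the shortest path from $x$ to $y$ in the tree.
   Context: $V$ is the set of finite words over $\{1,\dots,N\}$ including the empty word $\emptyset$; edges are exactly the pairs $\{\omega,\omega i\}$ ($\omega i$ = $\omega$ with letter $i$ appended). The Laplacian is $(\Delta v)(x)=\sum_{y\sim x}(v(x)-v(y))$. The energy Hilbert space $E$ is the completion (modulo constants) of functions $u$ on $V$ with respect to $\|u\|_E^2=\sum_{x\in V}\sum_{y\sim x}|u(x)-u(y)|^2$, with energy form $\mathcal E(u',u)=\sum_x\sum_{y\sim x}\overline{(u'(x)-u'(y))}(u(x)-u(y))$. For each $x\in V$, $v_x\in E$ denotes the solution, unique up to an additive constant, of $\Delta v_x=\delta_\emptyset-\delta_x$ (with $v_\emptyset$ constant), and the resistance metric is $\operatorname{dist}(x,y)=\|v_x-v_y\|_E$.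
   Formalization: All functions on V are real-valued, and the potential $v_x$ is a finite-energy solution of $\Delta v_x=\delta_\emptyset-\delta_x$ that also satisfies $\mathcal E(v_x,u)=2(u(\emptyset)-u(x))$ for every finite-energy function u. Apart from conventions, each condition added here is assumed in the paper as well or is needed for the statement above to hold. *)

From HB Require Import structures.
From mathcomp Require Import all_boot all_order all_algebra.
From mathcomp Require Import all_classical all_reals all_analysis.
Set Implicit Arguments. Unset Strict Implicit. Unset Printing Implicit Defensive.
Import Order.TTheory GRing.Theory Num.Theory numFieldNormedType.Exports.
Local Open Scope ring_scope.

(* Vertices of the N-ary tree: finite words over the alphabet 'I_N
   (letter i : 'I_N stands for the letter i+1 of {1,...,N}).
   The empty word [::] is the root (base point o). *)
Definition word (N : nat) := seq 'I_N.

Definition adj (N : nat) (x y : word N) : bool :=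
  [exists i : 'I_N, y == rcons x i] || [exists i : 'I_N, x == rcons y i].

Definition parent (N : nat) (x : word N) : word N := take (size x).-1 x.

Definition nbrs (N : nat) (x : word N) : seq (word N) :=
  [seq rcons x i | i <- enum 'I_N] ++ (if x is [::] then [::] else [:: parent x]).

Definition laplacian (R : realType) (N : nat) (v : word N -> R) (x : word N) : R :=
  \sum_(y <- nbrs x) (v x - v y).

Definition dirac (R : realType) (N : nat) (a x : word N) : R :=
  if x == a then 1 else 0.

Definition partial_form (R : realType) (N : nat) (u' u : word N -> R) (K : nat) : R :=
  \sum_(k < K.+1) \sum_(t : k.-tuple 'I_N)
     \sum_(y <- nbrs (tval t)) (u' (tval t) - u' y) * (u (tval t) - u y).

Definition finite_energy (R : realType) (N : nat) (u : word N -> R) : Prop :=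
  cvgn (partial_form u u).

Definition energy_form (R : realType) (N : nat) (u' u : word N -> R) : R :=
  limn (partial_form u' u).

Definition energy_norm (R : realType) (N : nat) (u : word N -> R) : R :=
  Num.sqrt (energy_form u u).

(* v is (a representative of) the potential v_x in the energy space E:
   v has finite energy, solves Delta v = delta_root - delta_x, and is the
   energy representer of that equation, i.e.  E(v,u) = 2 (u(root) - u(x))
   for all u in E (the factor 2 comes from each edge being counted twice in
   the energy).  This pins v down uniquely up to an additive constant. *)
Definition is_potential (R : realType) (N : nat) (x : word N) (v : word N -> R) : Prop :=
  [/\ finite_energy v,
      (forall z, laplacian v z = dirac R [::] z - dirac R x z)
    & (forall u : word N -> R, finite_energy u ->
         energy_form v u = 2 * (u [::] - u x))].

Fixpoint common_prefix (N : nat) (w e : word N) : nat :=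
  match w, e with
  | a :: w', b :: e' => if a == b then (common_prefix w' e').+1 else 0
  | _, _ => 0
  end.

Definition shortest_path_length (N : nat) (x y : word N) (k : nat) : Prop :=
  (exists p : seq (word N), [/\ path (@adj N) x p, last x p = y & size p = k])
  /\ (forall p : seq (word N), path (@adj N) x p -> last x p = y -> (k <= size p)%N).

From Pilot Require Import Defs.
From mathcomp Require Import all_boot all_order all_algebra.
From mathcomp Require Import all_classical all_reals all_analysis.
From mathcomp Require Import ring lra zify.
Import Order.TTheory GRing.Theory Num.Theory numFieldNormedType.Exports.
Set Implicit Arguments. Unset Strict Implicit. Unset Printing Implicit Defensive.

(* The potential [v = |eta| - p(., eta)] changes only along the edges of the
   path from the root to [eta], by exactly 1 on each of them.  Hence its
   Laplacian is [delta_root - delta_eta], and its energy pairing with any [u]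
   telescopes along that path to [2 (u root - u eta)], each edge being counted
   from both of its ends.  This representer property forces uniqueness up to
   constants: for another potential [v'], the partial energies of [v' - v]
   are eventually those of [v'] minus [2 (v' root - v' eta)], and the
   representer property identifies the latter with [E(v', v')], the supremum
   of the partial energies of [v'].  Finally
   [||v_x - v_y||^2 = E(v_x, v_x) - 2 E(v_x, v_y) + E(v_y, v_y)
                    = 2 (|x| + |y| - 2 p(x, y))],
   and [|x| + |y| - 2 p(x, y)] is the graph distance: crossing an edge changes
   it by at most one, and the path through the common prefix attains it. *)

Section TreeCombinatorics.
Variable N : nat.
Implicit Types w e x y z : word N.

Lemma common_prefix_leql w e : (common_prefix w e <= size w)%N.
Proof. by elim: w e => [|a w IH] [|b e] //=; case: eqP => // _; apply: IH. Qed.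

Lemma common_prefixC w e : common_prefix w e = common_prefix e w.
Proof. by elim: w e => [|a w IH] [|b e] //=; rewrite IH eq_sym. Qed.

Lemma common_prefix_leqr w e : (common_prefix w e <= size e)%N.
Proof. by rewrite common_prefixC common_prefix_leql. Qed.

Lemma common_prefix_id w : common_prefix w w = size w.
Proof. by elim: w => //= a w ->; rewrite eqxx. Qed.

Lemma common_prefix_eq_size w e : (common_prefix w e == size w) = prefix w e.
Proof.
elim: w e => [|a w IH] [|b e] //=; rewrite ?prefix_cons.
by case: (a == b); rewrite //= eqSS IH.
Qed.

Lemma take_common_prefix w e : take (common_prefix w e) w = take (common_prefix w e) e.
Proof. by elim: w e => [|a w IH] [|b e] //=; case: eqP => //= ->; rewrite IH. Qed.

Lemma common_prefix_rcons w i e :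
  common_prefix (rcons w i) e = (common_prefix w e + prefix (rcons w i) e)%N.
Proof.
elim: w e => [|a w IH] [|b e] //=; first by rewrite prefix0s; case: (i == b).
by case: (a == b); rewrite //= IH.
Qed.

Lemma prefix_rcons_prefix w i e : prefix (rcons w i) e -> prefix w e.
Proof. exact/prefix_trans/prefix_rcons. Qed.

Lemma prefix_rconsr w e i : prefix w (rcons e i) = (w == rcons e i) || prefix w e.
Proof.
elim: w e => [|a w IH] [|b e] //=; first by rewrite orbF.
by rewrite eqseq_cons IH; case: eqP.
Qed.

Lemma adjC x y : adj x y = adj y x.
Proof. by rewrite /adj orbC. Qed.

Lemma adj_rcons x i : adj x (rcons x i).
Proof. by apply/orP; left; apply/existsP; exists i. Qed.

Lemma nbrs_rcons x i :
  nbrs (rcons x i) = [seq rcons (rcons x i) k | k <- enum 'I_N] ++ [:: x].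
Proof. by rewrite /nbrs /parent size_rcons -cats1 take_size_cat //; case: x. Qed.

Definition tree_dist x y := (size x + size y - 2 * common_prefix x y)%N.

Lemma tree_dist_rcons x i y :
  (tree_dist x y <= (tree_dist (rcons x i) y).+1)%N /\
  (tree_dist (rcons x i) y <= (tree_dist x y).+1)%N.
Proof.
rewrite /tree_dist common_prefix_rcons size_rcons.
have := common_prefix_leql x y; have := common_prefix_leqr x y.
case: (boolP (prefix (rcons x i) y)) => /= hp; last by lia.
have := size_prefix hp; rewrite size_rcons.
have /eqP : common_prefix x y == size x by rewrite common_prefix_eq_size (prefix_rcons_prefix hp).
lia.
Qed.

Lemma tree_dist_adj x z y : adj x z -> (tree_dist x y <= (tree_dist z y).+1)%N.
Proof.
case/orP=> /existsP[i /eqP->].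
  exact: proj1 (tree_dist_rcons x i y).
exact: proj2 (tree_dist_rcons z i y).
Qed.

Lemma tree_dist_path_lb x y p :
  path (@adj N) x p -> last x p = y -> (tree_dist x y <= size p)%N.
Proof.
elim: p x => [|z p IH] x /=.
  by move=> _ ->; rewrite /tree_dist common_prefix_id; lia.
by case/andP=> hxz hp hl; rewrite (leq_trans (tree_dist_adj y hxz)) // ltnS IH.
Qed.

Lemma descending_path x y : prefix x y ->
  exists p, [/\ path (@adj N) x p, last x p = y & size p = size y - size x]%N.
Proof.
elim/last_ind: y => [|y j IH]; first by rewrite prefixs0 => /eqP->; exists [::].
rewrite prefix_rconsr => /orP[/eqP->|hxy]; first by exists [::]; rewrite subnn.
have [p [hp hl hs]] := IH hxy.
exists (rcons p (rcons y j)); split.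
- by rewrite rcons_path hp hl adj_rcons.
- by rewrite last_rcons.
- by rewrite !size_rcons hs subSn // size_prefix.
Qed.

Lemma ascending_path x y : prefix x y ->
  exists p, [/\ path (@adj N) y p, last y p = x & size p = size y - size x]%N.
Proof.
elim/last_ind: y => [|y j IH]; first by rewrite prefixs0 => /eqP->; exists [::].
rewrite prefix_rconsr => /orP[/eqP->|hxy]; first by exists [::]; rewrite subnn.
have [p [hp hl hs]] := IH hxy.
exists (y :: p); split => //=.
- by rewrite adjC adj_rcons hp.
- by rewrite size_rcons hs subSn // size_prefix.
Qed.

Lemma tree_dist_path x y :
  exists p, [/\ path (@adj N) x p, last x p = y & size p = tree_dist x y].
Proof.
set c := take (common_prefix x y) x.
have hcx : prefix c x := prefix_take _ _.
have hcy : prefix c y by rewrite /c take_common_prefix prefix_take.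
have hc : size c = common_prefix x y by rewrite size_takel // common_prefix_leql.
have [p [hp hlp hsp]] := ascending_path hcx.
have [q [hq hlq hsq]] := descending_path hcy.
exists (p ++ q); rewrite cat_path last_cat hp hlp hq hlq size_cat hsp hsq hc.
split=> //; rewrite /tree_dist.
have := common_prefix_leql x y; have := common_prefix_leqr x y; lia.
Qed.

Lemma shortest_path_length_tree_dist x y : shortest_path_length x y (tree_dist x y).
Proof. by split; [exact: tree_dist_path | exact: tree_dist_path_lb]. Qed.

End TreeCombinatorics.

Local Open Scope ring_scope.

Lemma sum_tuple_prefix (V : nmodType) (N : nat) (eta : word N) (F : word N -> V) k :
  (forall x, ~~ prefix x eta -> F x = 0) ->
  \sum_(t : k.-tuple 'I_N) F t = if (k <= size eta)%N then F (take k eta) else 0.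
Proof.
move=> F0; case: leqP => hk.
  have hs : size (take k eta) == k by rewrite size_takel.
  rewrite (bigD1 (Tuple hs)) //= big1 ?addr0 // => t ht; apply: F0; apply: contra ht.
  by rewrite prefixE size_tuple => /eqP htk; apply/eqP/val_inj; rewrite /= htk.
rewrite big1 // => t _; apply: F0; apply/negP => /size_prefix.
by rewrite size_tuple leqNgt hk.
Qed.

Lemma sum_ord_telescope (V : zmodType) (f : nat -> V) n :
  \sum_(k < n) (f k.+1 - f k) = f n - f 0%N.
Proof. by rewrite -(big_mkord xpredT (fun k => f k.+1 - f k)) telescope_sumr. Qed.

Section TreePotential.
Variables (R : realType) (N : nat) (eta : word N).
Implicit Types (x : word N) (F u : word N -> R).

Definition tree_potential x : R := (size eta)%:R - (common_prefix x eta)%:R.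

Lemma tree_potential_rcons x i :
  tree_potential x - tree_potential (rcons x i) = (prefix (rcons x i) eta)%:R.
Proof. by rewrite /tree_potential common_prefix_rcons natrD; ring. Qed.

Lemma sum_children_tree_potential F x :
  \sum_(i <- enum 'I_N) (tree_potential x - tree_potential (rcons x i)) * F (rcons x i) =
  if prefix x eta && (size x < size eta)%N then F (take (size x).+1 eta) else 0.
Proof.
under eq_bigr do rewrite tree_potential_rcons.
case: ifP => [/andP[hx hlt]|hx]; last first.
  rewrite big1 // => i _; case: (boolP (prefix _ _)) => [hp|]; last by rewrite mul0r.
  by move: hx; rewrite (prefix_rcons_prefix hp) -(size_rcons x i) size_prefix.
have j : 'I_N by move: hlt; case: (eta) => // j _; exact: j.
have hxi : take (size x).+1 eta = rcons x (nth j eta (size x)).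
  by rewrite (take_nth j hlt); move: hx; rewrite prefixE => /eqP->.
rewrite big_enum /= (bigD1 (nth j eta (size x))) //= big1 => [|i hi].
  by rewrite prefixE size_rcons hxi eqxx mul1r addr0.
by rewrite prefixE size_rcons hxi (inj_eq (@rcons_injr _ x)) eq_sym (negbTE hi) mul0r.
Qed.

Lemma sum_nbrs_tree_potential F x :
  \sum_(y <- nbrs x) (tree_potential x - tree_potential y) * F y =
    (if prefix x eta && (size x < size eta)%N then F (take (size x).+1 eta) else 0)
  - (if prefix x eta && (0 < size x)%N then F (parent x) else 0).
Proof.
case/lastP: x => [|x i].
  by rewrite /nbrs cats0 big_map sum_children_tree_potential andbF subr0.
rewrite nbrs_rcons big_cat big_map sum_children_tree_potential big_seq1.
rewrite /parent size_rcons -cats1 take_size_cat // cats1 andbT.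
rewrite -opprB tree_potential_rcons mulNr.
by case: (prefix (rcons x i) eta); rewrite ?mul1r ?mul0r.
Qed.

(* [Defs.dirac], not the Dirac measure [dirac] of mathcomp-analysis. *)
Lemma laplacian_tree_potential z :
  laplacian tree_potential z = Defs.dirac R [::] z - Defs.dirac R eta z.
Proof.
transitivity (\sum_(y <- nbrs z) (tree_potential z - tree_potential y) * 1).
  by apply: eq_bigr => y _; rewrite mulr1.
rewrite sum_nbrs_tree_potential /Defs.dirac; case: (boolP (prefix z eta)) => hp /=; last first.
  have -> : (z == [::]) = false by apply: contraNF hp => /eqP->; exact: prefix0s.
  by have -> : (z == eta) = false by apply: contraNF hp => /eqP->; exact: prefix_refl.
have -> : (z == eta) = (size z == size eta).
  by apply/eqP/eqP => [->//|hs]; move: hp; rewrite prefixE hs take_size => /eqP.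
rewrite -size_eq0; have := size_prefix hp.
by case: (posnP (size z)) => [->|hz]; case: ltngtP => //= _ _; rewrite ?hz; lra.
Qed.

Lemma partial_form_tree_potential u K : (size eta <= K)%N ->
  partial_form tree_potential u K = 2 * (u [::] - u eta).
Proof.
move=> hK; pose n := size eta; pose a k := u (take k eta).
pose E x := \sum_(y <- nbrs x) (tree_potential x - tree_potential y) * (u x - u y).
have E_off x : ~~ prefix x eta -> E x = 0.
  by move=> hx; rewrite /E sum_nbrs_tree_potential (negbTE hx) subrr.
have E_on k : (k <= n)%N -> E (take k eta) =
    (if (k < n)%N then a k - a k.+1 else 0) - (if (0 < k)%N then a k - a k.-1 else 0).
  move=> hk; rewrite /E sum_nbrs_tree_potential prefix_take /= /parent.
  by rewrite !size_takel // take_takel // leq_pred.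
transitivity (\sum_(k < K.+1) \sum_(t : k.-tuple 'I_N) E t) => //.
under eq_bigr => k _ do rewrite (sum_tuple_prefix k E_off).
have -> : \sum_(k < K.+1) (if (k <= n)%N then E (take k eta) else 0) =
          \sum_(k < n.+1) E (take k eta).
  by rewrite [RHS](big_ord_widen K.+1 (fun k => E (take k eta))) // [RHS]big_mkcond.
rewrite (eq_bigr _ (fun (k : 'I_n.+1) _ => E_on k (ltn_ord k))) sumrB.
rewrite big_ord_recr big_ord_recl /= ltnn addr0 add0r.
rewrite (eq_bigr (fun k : 'I_n => - (a k.+1 - a k))) => [|k _]; last by rewrite ltn_ord opprB.
rewrite [X in _ - X](eq_bigr (fun k : 'I_n => a k.+1 - a k)) // sumrN sum_ord_telescope.
by rewrite /a take0 take_size; ring.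
Qed.
End TreePotential.

Section PartialForm.
Variables (R : realType) (N : nat).
Implicit Types (a b : word N -> R) (x : word N).

Lemma partial_formC a b K : partial_form a b K = partial_form b a K.
Proof.
by apply: eq_bigr => k _; apply: eq_bigr => t _; apply: eq_bigr => y _; rewrite mulrC.
Qed.

Lemma partial_formBl a a' b K :
  partial_form (fun w => a w - a' w) b K = partial_form a b K - partial_form a' b K.
Proof.
rewrite /partial_form -sumrB; apply: eq_bigr => k _; rewrite -sumrB.
by apply: eq_bigr => t _; rewrite -sumrB; apply: eq_bigr => y _; ring.
Qed.

Lemma partial_formBr a b b' K :
  partial_form a (fun w => b w - b' w) K = partial_form a b K - partial_form a b' K.
Proof. by rewrite partial_formC partial_formBl !(partial_formC _ a). Qed.

Lemma partial_form_shift a b a' b' (c c' : R) K :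
  (forall w, a' w = a w + c) -> (forall w, b' w = b w + c') ->
  partial_form a' b' K = partial_form a b K.
Proof.
move=> ha hb; apply: eq_bigr => k _; apply: eq_bigr => t _; apply: eq_bigr => y _.
by rewrite !ha !hb; ring.
Qed.

Lemma partial_form_layer_ge0 a k :
  0 <= \sum_(t : k.-tuple 'I_N) \sum_(y <- nbrs t) (a t - a y) * (a t - a y).
Proof. by apply: sumr_ge0 => t _; apply: sumr_ge0 => y _; rewrite -expr2 sqr_ge0. Qed.

Lemma partial_form_nondecreasing a : nondecreasing_seq (partial_form a a).
Proof.
apply/nondecreasing_seqP => K; rewrite /partial_form [X in _ <= X]big_ord_recr /=.
by rewrite lerDl partial_form_layer_ge0.
Qed.

Lemma partial_form_edge_ler a x i K : (size x <= K)%N ->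
  (a x - a (rcons x i)) ^+ 2 <= partial_form a a K.
Proof.
move=> hK; apply: le_trans (partial_form_nondecreasing a hK).
rewrite /partial_form big_ord_recr /= -[X in X <= _]add0r lerD //.
  by apply: sumr_ge0 => k _; apply: partial_form_layer_ge0.
rewrite (bigD1 (in_tuple x)) //= -[X in X <= _]addr0 lerD //; last first.
  by apply: sumr_ge0 => t _; apply: sumr_ge0 => y _; rewrite -expr2 sqr_ge0.
have hxi : rcons x i \in nbrs x by rewrite mem_cat map_f ?mem_enum.
rewrite (big_rem _ hxi) /= -expr2 -[X in X <= _]addr0 lerD //.
by apply: sumr_ge0 => y _; rewrite -expr2 sqr_ge0.
Qed.

Lemma partial_form_le0_cst a m :
  (forall K, (m <= K)%N -> partial_form a a K <= 0) -> forall x, a x = a [::].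
Proof.
move=> H; elim/last_ind => [//|x i <-]; apply/esym/eqP; rewrite -subr_eq0 -sqrf_eq0.
rewrite eq_le sqr_ge0 andbT (le_trans (partial_form_edge_ler a i (leq_maxl _ m))) //.
exact/H/leq_maxr.
Qed.

End PartialForm.

Lemma eventually_cst_cvgn (R : realType) (f : nat -> R) c m :
  (forall K, (m <= K)%N -> f K = c) -> (f @ \oo --> c)%classic.
Proof. by move=> H; apply: cvg_near_cst; exists m => // K /H. Qed.

Section Potentials.
Variables (R : realType) (N : nat).
Implicit Types (eta x y : word N) (v u : word N -> R).

Lemma tree_potential_root eta : tree_potential R eta [::] = (size eta)%:R.
Proof. by rewrite /tree_potential subr0. Qed.

Lemma tree_potential_self eta : tree_potential R eta eta = 0.
Proof. by rewrite /tree_potential common_prefix_id subrr. Qed.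

Lemma partial_form_tree_potential_cvg eta u :
  (partial_form (tree_potential R eta) u @ \oo --> 2 * (u [::] - u eta))%classic.
Proof. exact: eventually_cst_cvgn (partial_form_tree_potential u). Qed.

Lemma tree_potential_is_potential eta : is_potential eta (tree_potential R eta).
Proof.
split=> [|z|u _]; first by apply/cvg_ex; eexists; exact: partial_form_tree_potential_cvg.
- exact: laplacian_tree_potential.
- by rewrite /energy_form; apply: cvg_lim => //; exact: partial_form_tree_potential_cvg.
Qed.

Lemma is_potential_unique eta v :
  is_potential eta v -> exists c, forall w, v w = tree_potential R eta w + c.
Proof.
case=> v_fin _ v_rep; set v0 := tree_potential R eta.
have [v0_fin _ _] := tree_potential_is_potential eta.
have pf_v_v0 K : (size eta <= K)%N -> partial_form v v0 K = 2 * (v [::] - v eta).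
  by move=> hK; rewrite partial_formC partial_form_tree_potential.
have drop_v : v [::] - v eta = v0 [::] - v0 eta.
  have := v_rep v0 v0_fin; rewrite /energy_form.
  by rewrite (cvg_lim _ (eventually_cst_cvgn pf_v_v0)) //; lra.
have pf_v_le K : partial_form v v K <= 2 * (v [::] - v eta).
  rewrite -(v_rep v v_fin).
  exact: nondecreasing_cvgn_le (partial_form_nondecreasing v) v_fin K.
suff v_v0_cst w : v w - v0 w = v [::] - v0 [::].
  by exists (v [::] - v0 [::]) => w; rewrite -(v_v0_cst w); ring.
apply: (@partial_form_le0_cst _ _ (fun w => v w - v0 w) (size eta)) => K hK.
(* First arguments are explicit: [v0] itself unfolds to a difference. *)
rewrite partial_formBl (partial_formBr v) (partial_formBr v0) pf_v_v0 //.
rewrite !partial_form_tree_potential //.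
by have := pf_v_le K; lra.
Qed.

Lemma partial_form_tree_potential_diff x y K : (maxn (size x) (size y) <= K)%N ->
  partial_form (fun w => tree_potential R x w - tree_potential R y w)
               (fun w => tree_potential R x w - tree_potential R y w) K =
  2 * (tree_dist x y)%:R.
Proof.
rewrite geq_max => /andP[hx hy].
rewrite partial_formBl (partial_formBr (tree_potential R x)) (partial_formBr (tree_potential R y)).
rewrite !partial_form_tree_potential //.
rewrite !tree_potential_root !tree_potential_self /tree_potential (common_prefixC y x).
have cp_le := common_prefix_leql x y; have cp_ler := common_prefix_leqr x y.
rewrite /tree_dist natrB; last by lia.
by rewrite natrD natrM; ring.
Qed.

End Potentials.

Theorem proposition4p5 (R : realType) (N : nat) (hN : (1 <= N)%N) :
  (forall eta : word N, (1 <= size eta)%N ->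
     let v := fun w : word N => ((size eta)%:R - (common_prefix w eta)%:R : R) in
     is_potential eta v /\
     (forall v' : word N -> R, is_potential eta v' ->
        exists c : R, forall w, v' w = v w + c)) /\
  (forall (x y : word N) (vx vy : word N -> R),
     is_potential x vx -> is_potential y vy ->
     exists l : nat, shortest_path_length x y l /\
       energy_norm (fun w => vx w - vy w) = Num.sqrt (2 * l%:R)).
Proof.
split=> [eta _ v|x y vx vy /is_potential_unique[cx ex] /is_potential_unique[cy ey]].
  by split; [exact: tree_potential_is_potential | exact: is_potential_unique].
exists (tree_dist x y); split; first exact: shortest_path_length_tree_dist.
rewrite /energy_norm /energy_form; congr Num.sqrt; apply: cvg_lim => //.
apply: (eventually_cst_cvgn (m := maxn (size x) (size y))) => K hK.
rewrite -(partial_form_tree_potential_diff R hK).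
by apply: (partial_form_shift (c := cx - cy) (c' := cx - cy)) => w /=; rewrite ex ey; ring.
Qed.
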